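(* Let $S$ be an eventually regular semigroup with a primitive idempotent $e$. Then the ideal of $S$ generated by $e$ is completely simple (and $J_e$ is the minimum $\mathcal J$-class of $S$).
   Context: $S$ is eventually regular if for each $a\in S$ there are $n\ge1$, $b\in S$ with $a^nba^n=a^n$. An idempotent $e$ is primitive if for every idempotent $f$ with $ef=fe=f$ one has $f=e$. $J_e$ denotes the Green's $\mathcal J$-class of $e$. *)

From Stdlib Require Import Arith.

Set Implicit Arguments.
Section Semigroups.
Variables (T : Type) (mul : T -> T -> T).

(* spow a n = a^(n+1), i.e. positive powers of a *)
Fixpoint spow (a : T) (n : nat) : T :=
  match n with
  | O => a
  | Datatypes.S m => mul a (spow a m)
  end.

Definition eventually_regular : Prop :=
  forall a : T, exists (n : nat) (b : T),
    mul (mul (spow a n) b) (spow a n) = spow a n.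

Definition idempotent (e : T) : Prop := mul e e = e.

Definition primitive (e : T) : Prop :=
  idempotent e /\
  forall f : T, idempotent f -> mul e f = f -> mul f e = f -> f = e.

(* a \in S^1 x S^1, i.e. a lies in the principal two-sided ideal generated by x *)
Definition in_ideal_gen (x a : T) : Prop :=
  a = x \/ (exists s, a = mul s x) \/ (exists t, a = mul x t)
  \/ (exists s t, a = mul (mul s x) t).

(* J-order: J_a <= J_b  iff  S^1 a S^1 ⊆ S^1 b S^1  iff  a ∈ S^1 b S^1 *)
Definition Jle (a b : T) : Prop := in_ideal_gen b a.

Definition mul_closed (A : T -> Prop) : Prop :=
  forall a b, A a -> A b -> A (mul a b).

Definition is_ideal_of (A J : T -> Prop) : Prop :=
  (forall j, J j -> A j) /\
  (forall a j, A a -> J j -> J (mul a j) /\ J (mul j a)).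

Definition simple_sub (A : T -> Prop) : Prop :=
  (exists a, A a) /\
  forall J, is_ideal_of A J -> (exists j, J j) -> forall a, A a -> J a.

Definition primitive_in (A : T -> Prop) (e : T) : Prop :=
  A e /\ idempotent e /\
  forall f, A f -> idempotent f -> mul e f = f -> mul f e = f -> f = e.

Definition completely_simple_sub (A : T -> Prop) : Prop :=
  mul_closed A /\ simple_sub A /\ exists e, primitive_in A e.

End Semigroups.

(* Write x := e a e.  Eventual regularity makes some power y of x regular,
   y b y = y, and since y lies in the corner eSe so does the idempotent
   y (e b e); primitivity forces y (e b e) = e.  As y is a right multiple of
   e a, the element e lies in (e a) S for every a.  Hence e lies below every
   element in the J-order, and any element j of an ideal of S^1 e S^1 yields
   e = (e j)(t e) inside that ideal, so S^1 e S^1 is simple. *)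

Set Implicit Arguments.

Section PrimitiveIdempotent.

Variables (S : Type) (mul : S -> S -> S).
Hypothesis mulA : forall a b c : S, mul a (mul b c) = mul (mul a b) c.

Lemma in_ideal_gen_mul_r {x a : S} (b : S) :
  in_ideal_gen mul x a -> in_ideal_gen mul x (mul a b).
Proof.
  intros [->|[[s ->]|[[t ->]|[s [t ->]]]]]; unfold in_ideal_gen.
  - right; right; left. exists b; reflexivity.
  - right; right; right. exists s, b; reflexivity.
  - right; right; left. exists (mul t b). rewrite mulA; reflexivity.
  - right; right; right. exists s, (mul t b). rewrite mulA; reflexivity.
Qed.

Lemma in_ideal_gen_idem {e a : S} :
  idempotent mul e -> in_ideal_gen mul e a -> exists s t, a = mul (mul s e) t.
Proof.
  unfold idempotent. intros He [->|[[s ->]|[[t ->]|[s [t ->]]]]].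
  - exists e, e. rewrite !He; reflexivity.
  - exists s, e. rewrite <- mulA, He; reflexivity.
  - exists e, t. rewrite He; reflexivity.
  - exists s, t; reflexivity.
Qed.

Lemma spow_mul_l (u v : S) (m : nat) : exists z, spow mul (mul u v) m = mul u z.
Proof.
  induction m as [|m _]; simpl.
  - exists v; reflexivity.
  - exists (mul v (spow mul (mul u v) m)). rewrite mulA; reflexivity.
Qed.

Definition in_corner (e y : S) : Prop := mul e y = y /\ mul y e = y.

Lemma in_corner_mul (e y z : S) :
  in_corner e y -> in_corner e z -> in_corner e (mul y z).
Proof.
  intros [Hy _] [_ Hz]. split.
  - rewrite mulA, Hy; reflexivity.
  - rewrite <- mulA, Hz; reflexivity.
Qed.

Lemma in_corner_spow (e x : S) (m : nat) :
  in_corner e x -> in_corner e (spow mul x m).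
Proof.
  intros Hx. induction m as [|m IHm]; simpl; [exact Hx|].
  apply in_corner_mul; assumption.
Qed.

Lemma in_corner_sandwich (e a : S) :
  idempotent mul e -> in_corner e (mul (mul e a) e).
Proof.
  unfold idempotent. intros He. split.
  - rewrite !mulA, He; reflexivity.
  - rewrite <- !mulA, He; reflexivity.
Qed.

Lemma primitive_regular_in_corner {e y b : S} :
  primitive mul e -> in_corner e y -> mul (mul y b) y = y ->
  mul y (mul (mul e b) e) = e.
Proof.
  intros [He Hprim] [Hey Hye] Hyby.
  set (c := mul (mul e b) e).
  assert (Hycy : mul (mul y c) y = y).
  { unfold c.
    replace (mul (mul y (mul (mul e b) e)) y)
      with (mul (mul (mul y e) b) (mul e y)) by (rewrite !mulA; reflexivity).
    rewrite Hey, Hye. exact Hyby. }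
  apply Hprim.
  - unfold idempotent. rewrite mulA, Hycy. reflexivity.
  - rewrite mulA, Hey. reflexivity.
  - unfold c. rewrite <- !mulA. rewrite He. reflexivity.
Qed.

Lemma primitive_in_mul_eS (e : S) :
  eventually_regular mul -> primitive mul e ->
  forall a, exists t, e = mul (mul e a) t.
Proof.
  intros Hreg Hprim a.
  destruct (Hreg (mul (mul e a) e)) as [n [b Hb]].
  assert (Hy : in_corner e (spow mul (mul (mul e a) e) n)).
  { apply in_corner_spow, in_corner_sandwich, (proj1 Hprim). }
  pose proof (primitive_regular_in_corner Hprim Hy Hb) as Hyc.
  destruct (spow_mul_l (mul e a) e n) as [z Hz].
  exists (mul z (mul (mul e b) e)).
  rewrite <- Hyc at 1. rewrite Hz. apply eq_sym, mulA.
Qed.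

Lemma simple_ideal_gen (e : S) :
  idempotent mul e -> (forall a, exists t, e = mul (mul e a) t) ->
  simple_sub mul (in_ideal_gen mul e).
Proof.
  unfold idempotent. intros He HeS.
  split; [exists e; left; reflexivity|].
  intros J [_ HJ] [j Hj] a Ha.
  assert (Ie : in_ideal_gen mul e e) by (left; reflexivity).
  assert (Ise : forall s, in_ideal_gen mul e (mul s e))
    by (intro s; right; left; exists s; reflexivity).
  assert (Iet : forall t, in_ideal_gen mul e (mul e t))
    by (intro t; right; right; left; exists t; reflexivity).
  assert (Je : J e).
  { destruct (HeS j) as [t Het].
    replace e with (mul (mul e j) (mul t e)) by (rewrite mulA, <- Het, He; reflexivity).
    apply (HJ (mul t e) (mul e j) (Ise t)), (HJ e j Ie Hj). }
  destruct (in_ideal_gen_idem He Ha) as [s [t ->]].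
  replace (mul (mul s e) t) with (mul (mul (mul s e) e) (mul e t))
    by (rewrite <- !mulA; repeat rewrite (mulA e e), He; reflexivity).
  apply (HJ (mul e t) _ (Iet t)), (HJ (mul s e) e (Ise s) Je).
Qed.

End PrimitiveIdempotent.

Theorem lemma3p5 (S : Type) (mul : S -> S -> S)
  (mulA : forall a b c : S, mul a (mul b c) = mul (mul a b) c)
  (Hreg : eventually_regular (T:=S) mul) (e : S) (He : primitive (T:=S) mul e) :
  completely_simple_sub (T:=S) mul (in_ideal_gen (T:=S) mul e) /\
  (forall a : S, Jle (T:=S) mul e a).
Proof.
  pose proof (primitive_in_mul_eS mulA Hreg He) as HeS.
  destruct He as [Hid Hprim].
  split; [split; [|split]|].
  - intros a b Ha _. exact (in_ideal_gen_mul_r mulA b Ha).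
  - exact (simple_ideal_gen mulA Hid HeS).
  - exists e. split; [left; reflexivity|]. split; [exact Hid|].
    intros f _. exact (Hprim f).
  - intro a. destruct (HeS a) as [t Ht].
    right; right; right. exists e, t. exact Ht.
Qed.
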